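(* Let $p\in(0,1)$ and $\Phi(a,s)=p(1-p)(2-s)^2(s-a)-a(1-s)$. Let $f(x)=(2-x)^{2-x}p(1-p)^{1-x}(1-x)^{x-1}$ for $x\le1$ (with $0^0=1$). (a) For each $a\in[0,1]$ there is a unique $s\in[a,1]$ with $\Phi(a,s)=0$; denote it $\phi(a)$. If $a\in\{0,1\}$ then $\phi(a)=a$; if $a\in(0,1)$ then $0<a<\phi(a)<1$. (b) For $a\in(0,1)$, if $s=\phi(a)$ then $\dfrac{s f(s)^{a/s}}{a^{a/s}(s-a)^{1-a/s}}=\dfrac{s}{s-a}\left(\dfrac{1-s}{(1-p)(2-s)}\right)^a$. (c) $\phi$ is increasing on $[0,1]$ and differentiable on $(0,1)$. (d) $\phi$ is invertible and $\phi^{-1}$ is increasing; if $s\in\{0,1\}$ then $\phi^{-1}(s)=s$; if $s\in(0,1)$ then $0<\phi^{-1}(s)<s<1$. *)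

From Stdlib Require Import Reals.
From Coquelicot Require Import Coquelicot.
Open Scope R_scope.

Definition Phi (p a s : R) : R :=
  p * (1 - p) * (2 - s) ^ 2 * (s - a) - a * (1 - s).

(* Real power with the convention 0^0 = 1 (and 0^y = 0 for y <> 0);
   for x > 0 it is Rpower x y = exp (y ln x). *)
Definition rpow (x y : R) : R :=
  if Rlt_dec 0 x then Rpower x y
  else if Req_EM_T y 0 then 1 else 0.

Definition fpow (p x : R) : R :=
  rpow (2 - x) (2 - x) * p * rpow (1 - p) (1 - x) * rpow (1 - x) (x - 1).

(* Solving [Phi p a s = 0] for [a] gives the explicit function
   [a = root_inv p s = p(1-p) s (2-s)^2 / (1 - s + p(1-p)(2-s)^2)], whose
   denominator is positive and whose derivative is positive for [s <= 1].
   Hence [root_inv p] is a strictly increasing bijection of [[0,1]] fixing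
   [0] and [1] with [0 < root_inv p s < s] inside, and any [phi] as in the
   statement is its inverse; differentiability follows from the inverse
   function theorem. Identity (b) is the logarithm of [Phi p a s = 0]. *)
From Stdlib Require Import Reals Lra Psatz Ranalysis5.
From Coquelicot Require Import Coquelicot.
Open Scope R_scope.

Definition root_den (p s : R) : R := 1 - s + p * (1 - p) * (2 - s) ^ 2.

Definition root_inv (p s : R) : R := p * (1 - p) * s * (2 - s) ^ 2 / root_den p s.

Definition root_inv_deriv (p s : R) : R :=
  p * (1 - p) * (2 - s) * (2 - 3 * s + 2 * s ^ 2 + p * (1 - p) * (2 - s) ^ 3)
  / root_den p s ^ 2.

Lemma rpow_pos (x y : R) : 0 < x -> rpow x y = exp (y * ln x).
Proof. intros hx; unfold rpow; destruct (Rlt_dec 0 x); [reflexivity | lra]. Qed.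

Lemma exp_quot_prod (c X Y Z : R) : c * exp X / (exp Y * exp Z) = c * exp (X - Y - Z).
Proof.
unfold Rminus; rewrite !exp_plus, !exp_Ropp.
pose proof (exp_pos Y); pose proof (exp_pos Z); field; lra.
Qed.

Section RootInverse.

Variable p : R.
Hypothesis hp : 0 < p < 1.

Let pq_pos : 0 < p * (1 - p).
Proof. nra. Qed.

Lemma root_den_pos (s : R) : s <= 1 -> 0 < root_den p s.
Proof. intros hs; unfold root_den; assert (0 < (2 - s) ^ 2) by nra; nra. Qed.

Lemma Phi_eq0_iff (a s : R) : s <= 1 -> Phi p a s = 0 <-> a = root_inv p s.
Proof.
intros hs; pose proof (root_den_pos s hs) as hD.
unfold Phi, root_inv, root_den in *; split; intros E.
- apply (Rmult_eq_reg_r (1 - s + p * (1 - p) * (2 - s) ^ 2)); [|lra].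
  field_simplify; lra.
- subst a; field; lra.
Qed.

Lemma root_inv_derivable (s : R) :
  s <= 1 -> derivable_pt_lim (root_inv p) s (root_inv_deriv p s).
Proof.
intros hs; pose proof (root_den_pos s hs) as hD.
apply is_derive_Reals; unfold root_inv, root_inv_deriv, root_den in *.
auto_derive; [lra | field; lra].
Qed.

Lemma root_inv_deriv_pos (s : R) : s <= 1 -> 0 < root_inv_deriv p s.
Proof.
intros hs; pose proof (root_den_pos s hs).
assert (0 < (2 - s) ^ 3) by (apply pow_lt; lra).
unfold root_inv_deriv; apply Rdiv_lt_0_compat; [|apply pow_lt; lra].
apply Rmult_lt_0_compat; nra.
Qed.

Lemma root_inv_lt (x y : R) : x < y -> y <= 1 -> root_inv p x < root_inv p y.
Proof.
intros hxy hy.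
destruct (MVT_cor2 (root_inv p) (root_inv_deriv p) x y hxy) as [c [E hc]].
{ intros c hc; apply root_inv_derivable; lra. }
pose proof (root_inv_deriv_pos c ltac:(lra)); nra.
Qed.

Lemma root_inv_inj (x y : R) :
  x <= 1 -> y <= 1 -> root_inv p x = root_inv p y -> x = y.
Proof.
intros hx hy E; destruct (Rtotal_order x y) as [h|[h|h]]; auto.
- pose proof (root_inv_lt x y h hy); lra.
- pose proof (root_inv_lt y x h hx); lra.
Qed.

Lemma root_inv0 : root_inv p 0 = 0.
Proof. pose proof (root_den_pos 0 ltac:(lra)); unfold root_inv; field; lra. Qed.

Lemma root_inv1 : root_inv p 1 = 1.
Proof.
pose proof (root_den_pos 1 ltac:(lra)); unfold root_inv, root_den in *; field; lra.
Qed.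

Lemma root_inv_bounds (s : R) : 0 < s < 1 -> 0 < root_inv p s < s.
Proof.
intros hs; pose proof (root_den_pos s ltac:(lra)) as hD.
assert (0 < (2 - s) ^ 2) by nra.
unfold root_inv; split.
- apply Rdiv_lt_0_compat; [|lra].
  repeat apply Rmult_lt_0_compat; lra.
- apply (Rmult_lt_reg_r (root_den p s)); [lra|].
  unfold Rdiv; rewrite Rmult_assoc, Rinv_l by lra.
  unfold root_den in *; assert (0 < s * (1 - s)) by nra; nra.
Qed.

Lemma root_inv_range (s : R) : 0 <= s <= 1 -> 0 <= root_inv p s <= 1.
Proof.
intros hs; destruct (Req_dec s 0) as [->|?]; [rewrite root_inv0; lra|].
destruct (Req_dec s 1) as [->|?]; [rewrite root_inv1; lra|].
pose proof (root_inv_bounds s ltac:(lra)); lra.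
Qed.

Lemma Phi_root_exists (a : R) : 0 <= a <= 1 -> exists s, a <= s <= 1 /\ Phi p a s = 0.
Proof.
intros ha.
destruct (IVT_cor (Phi p a) a 1) as [s [hs hz]]; [| lra | | now exists s].
- apply derivable_continuous; intros x; apply ex_derive_Reals_0.
  unfold Phi; auto_derive; auto.
- assert (0 <= p * (1 - p) * (2 - 1) ^ 2 * (1 - a))
    by (apply Rmult_le_pos; [nra | lra]).
  assert (0 <= a * (1 - a)) by nra.
  unfold Phi; nra.
Qed.

Lemma Phi_root_exists_unique (a : R) :
  0 <= a <= 1 -> exists! s, a <= s <= 1 /\ Phi p a s = 0.
Proof.
intros ha; destruct (Phi_root_exists a ha) as [s [hs hz]]; exists s; split; [easy|].
intros s' [hs' hz']; apply root_inv_inj; [lra | lra|].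
apply Phi_eq0_iff in hz'; [|lra]; apply Phi_eq0_iff in hz; lra.
Qed.

Lemma Phi_root_log (a s : R) :
  0 < a < s -> s < 1 -> Phi p a s = 0 ->
  ln p + ln (1 - p) + 2 * ln (2 - s) + ln (s - a) = ln a + ln (1 - s).
Proof.
intros has hs E.
assert (E2 : p * (1 - p) * ((2 - s) * (2 - s)) * (s - a) = a * (1 - s))
  by (unfold Phi in E; lra).
apply (f_equal ln) in E2.
rewrite !ln_mult in E2 by (repeat apply Rmult_lt_0_compat; lra); lra.
Qed.

Lemma fpow_ratio_at_root (a s : R) :
  0 < a < s -> s < 1 -> Phi p a s = 0 ->
  s * rpow (fpow p s) (a / s) / (rpow a (a / s) * rpow (s - a) (1 - a / s))
  = s / (s - a) * rpow ((1 - s) / ((1 - p) * (2 - s))) a.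
Proof.
intros has hs E; pose proof (Phi_root_log a s has hs E) as hlog.
assert (hf : fpow p s
  = exp ((2 - s) * ln (2 - s) + ln p + (1 - s) * ln (1 - p) + (s - 1) * ln (1 - s))).
{ unfold fpow; rewrite !rpow_pos, !exp_plus, exp_ln by lra; ring. }
assert (hq : 0 < (1 - s) / ((1 - p) * (2 - s))) by (apply Rdiv_lt_0_compat; nra).
rewrite hf, !rpow_pos, ln_exp, ln_div, ln_mult by (try apply exp_pos; nra).
replace (s / (s - a)) with (s * exp (- ln (s - a)))
  by (rewrite exp_Ropp, exp_ln by lra; reflexivity).
rewrite exp_quot_prod, Rmult_assoc, <- exp_plus.
do 2 f_equal.
replace (ln (s - a))
  with (ln a + ln (1 - s) - ln p - ln (1 - p) - 2 * ln (2 - s)) by lra.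
field; lra.
Qed.

Section RootFunction.

Variable phi : R -> R.
Hypothesis phi_root : forall a, 0 <= a <= 1 -> a <= phi a <= 1 /\ Phi p a (phi a) = 0.

Lemma phi_range (a : R) : 0 <= a <= 1 -> 0 <= phi a <= 1.
Proof. intros ha; destruct (phi_root a ha); lra. Qed.

Lemma root_inv_phi (a : R) : 0 <= a <= 1 -> root_inv p (phi a) = a.
Proof.
intros ha; destruct (phi_root a ha) as [h1 h2].
now apply Phi_eq0_iff in h2; [|lra].
Qed.

Lemma phi_root_inv (s : R) : 0 <= s <= 1 -> phi (root_inv p s) = s.
Proof.
intros hs; pose proof (root_inv_range s hs) as hr.
pose proof (phi_range _ hr); apply root_inv_inj; [lra | lra|].
exact (root_inv_phi _ hr).
Qed.

Lemma phi0 : phi 0 = 0.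
Proof. rewrite <- root_inv0 at 1; apply phi_root_inv; lra. Qed.

Lemma phi1 : phi 1 = 1.
Proof. rewrite <- root_inv1 at 1; apply phi_root_inv; lra. Qed.

Lemma phi_lt (x y : R) : 0 <= x <= 1 -> 0 <= y <= 1 -> x < y -> phi x < phi y.
Proof.
intros hx hy hxy; pose proof (phi_range x hx); pose proof (phi_range y hy).
destruct (Rlt_or_le (phi x) (phi y)) as [h|h]; [exact h|].
assert (root_inv p (phi y) <= root_inv p (phi x)) as hle.
{ destruct (Req_dec (phi y) (phi x)) as [->|?]; [lra|].
  apply Rlt_le, root_inv_lt; lra. }
rewrite !root_inv_phi in hle by lra; lra.
Qed.

Lemma phi_bounds (a : R) : 0 < a < 1 -> 0 < a < phi a /\ phi a < 1.
Proof.
intros ha; pose proof (phi_lt a 1 ltac:(lra) ltac:(lra) ltac:(lra)).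
rewrite phi1 in *; destruct (phi_root a ltac:(lra)) as [h1 _].
destruct (Req_dec (phi a) a) as [e|]; [|lra].
pose proof (root_inv_phi a ltac:(lra)) as hg; rewrite e in hg.
pose proof (root_inv_bounds a ha); lra.
Qed.

Lemma phi_derivable (a : R) : 0 < a < 1 -> ex_derive phi a.
Proof.
intros ha; apply ex_derive_Reals_1.
pose proof (phi_range a ltac:(lra)) as hpa.
assert (hlt : 0 < 1) by lra.
assert (ha' : root_inv p 0 < a < root_inv p 1) by (rewrite root_inv0, root_inv1; lra).
assert (hinv : forall x, root_inv p 0 <= x -> x <= root_inv p 1 ->
                 comp (root_inv p) phi x = id x).
{ intros x h0 h1; rewrite root_inv0, root_inv1 in *; unfold comp, id; apply root_inv_phi; lra. }
assert (hwf : forall x, root_inv p 0 <= x -> x <= root_inv p 1 -> 0 <= phi x <= 1).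
{ intros x h0 h1; rewrite root_inv0, root_inv1 in *; apply phi_range; lra. }
assert (hmono : forall x y, 0 <= x -> x < y -> y <= 1 -> root_inv p x < root_inv p y).
{ intros x y _ hxy hy; exact (root_inv_lt x y hxy hy). }
assert (hder : forall b, 0 <= b <= 1 -> derivable_pt (root_inv p) b).
{ intros b hb; exists (root_inv_deriv p b); apply root_inv_derivable; lra. }
apply (derivable_pt_recip_interv _ _ _ _ _ hlt ha' hinv hwf hmono hder).
rewrite (derive_pt_eq_0 _ _ (root_inv_deriv p (phi a)));
  [|apply root_inv_derivable; lra].
pose proof (root_inv_deriv_pos (phi a) ltac:(lra)); lra.
Qed.

End RootFunction.

End RootInverse.

Theorem lemma14 (p : R) (hp : 0 < p < 1) :
  (forall a : R, 0 <= a <= 1 ->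
     exists! s : R, a <= s <= 1 /\ Phi p a s = 0) /\
  (forall phi : R -> R,
     (forall a : R, 0 <= a <= 1 -> a <= phi a <= 1 /\ Phi p a (phi a) = 0) ->
     phi 0 = 0 /\ phi 1 = 1 /\
     (forall a : R, 0 < a < 1 -> 0 < a < phi a /\ phi a < 1) /\
     (forall a : R, 0 < a < 1 ->
        let s := phi a in
        s * rpow (fpow p s) (a / s)
          / (rpow a (a / s) * rpow (s - a) (1 - a / s))
        = s / (s - a) * rpow ((1 - s) / ((1 - p) * (2 - s))) a) /\
     (forall x y : R, 0 <= x <= 1 -> 0 <= y <= 1 -> x < y -> phi x < phi y) /\
     (forall a : R, 0 < a < 1 -> ex_derive phi a) /\
     (exists psi : R -> R,
        (forall a : R, 0 <= a <= 1 -> 0 <= phi a <= 1 /\ psi (phi a) = a) /\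
        (forall s : R, 0 <= s <= 1 -> 0 <= psi s <= 1 /\ phi (psi s) = s) /\
        (forall x y : R, 0 <= x <= 1 -> 0 <= y <= 1 -> x < y -> psi x < psi y) /\
        psi 0 = 0 /\ psi 1 = 1 /\
        (forall s : R, 0 < s < 1 -> 0 < psi s /\ psi s < s /\ s < 1))).
Proof.
split; [exact (Phi_root_exists_unique p hp)|].
intros phi hphi.
split; [exact (phi0 p hp phi hphi)|].
split; [exact (phi1 p hp phi hphi)|].
split; [exact (phi_bounds p hp phi hphi)|].
split.
{ intros a ha; cbv zeta; pose proof (phi_bounds p hp phi hphi a ha).
  apply fpow_ratio_at_root; [exact hp | lra | lra | apply hphi; lra]. }
split; [exact (phi_lt p hp phi hphi)|].
split; [exact (phi_derivable p hp phi hphi)|].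
exists (root_inv p); split; [|split; [|split; [|split; [|split]]]].
- intros a ha; split; [exact (phi_range p phi hphi a ha)|].
  exact (root_inv_phi p hp phi hphi a ha).
- intros s hs; split; [exact (root_inv_range p hp s hs)|].
  exact (phi_root_inv p hp phi hphi s hs).
- intros x y _ hy hxy; apply (root_inv_lt p hp); lra.
- exact (root_inv0 p hp).
- exact (root_inv1 p hp).
- intros s hs; pose proof (root_inv_bounds p hp s hs); lra.
Qed.
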